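(* Let $G$ be a group generated by a finite subset $T \subseteq G$, let $N \lhd G$ be a normal subgroup of finite index, and let $\overline{T}$ be the multiset $\{tN : t \in T\}$ in $G/N$. Then $d_G(N) \leq r(G/N, \overline{T})$.
   Context: For a group $G$ and subsets $S, X \subseteq G$, $\langle S \rangle^X$ denotes the subgroup generated by all conjugates $xsx^{-1}$ with $s \in S$, $x \in X$. For $N \lhd G$, $d_G(N)$ is the least cardinality of a subset $S \subseteq N$ with $\langle S \rangle^G = N$. For a finite group $K$ and a generating multiset $T = \{t_1, \dots, t_d\}$ of $K$, let $F$ be the free group on $x_1, \dots, x_d$ and $\varphi : F \to K$ the surjection with $\varphi(x_i) = t_i$; then $r(K,T) = d_F(\mathrm{Ker}(\varphi))$. *)

From HB Require Import structures.
From mathcomp Require Import all_boot.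

Set Implicit Arguments.
Unset Strict Implicit.
Unset Printing Implicit Defensive.

Local Open Scope group_scope.

Inductive gen_by (G : groupType) (A : G -> Prop) : G -> Prop :=
| gen_base x : A x -> gen_by A x
| gen_one : gen_by A 1
| gen_mul x y : gen_by A x -> gen_by A y -> gen_by A (x * y)
| gen_inv x : gen_by A x -> gen_by A x^-1.

Definition normal_closure (G : groupType) (S : seq G) : G -> Prop :=
  gen_by (fun y => exists2 s, s \in S & exists x : G, y = x * s * x^-1).

Definition normally_generates (G : groupType) (N : G -> Prop) (S : seq G) :=
  (forall s, s \in S -> N s) /\ (forall g, normal_closure S g <-> N g).

(* d_G(N) <= m : some subset of N of cardinality at most m normally
   generates N (a sequence of length <= m spans a set of cardinality <= m). *)
Definition normal_rank_le (G : groupType) (N : G -> Prop) (m : nat) :=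
  exists S : seq G, size S <= m /\ normally_generates N S.

Definition is_subgroup (G : groupType) (N : G -> Prop) :=
  [/\ N 1, (forall x y, N x -> N y -> N (x * y)) & (forall x, N x -> N x^-1)].

Definition is_normal (G : groupType) (N : G -> Prop) :=
  is_subgroup N /\ (forall x g : G, N x -> N (g * x * g^-1)).

Definition finite_index (G : groupType) (N : G -> Prop) :=
  exists reps : seq G, forall g : G, exists2 r, r \in reps & N (r^-1 * g).

Definition is_group_hom (G K : groupType) (f : G -> K) :=
  forall x y : G, f (x * y) = f x * f y.

(* A letter (i, false) stands for x_i, (i, true) for x_i^-1.                *)

Section FreeGroup.
Variable d : nat.

Definition letter := ('I_d * bool)%type.
Definition linv (a : letter) : letter := (a.1, ~~ a.2).
Lemma linvK : involutive linv.
Proof. by case=> i b; rewrite /linv /= negbK. Qed.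

Definition reduced (w : seq letter) := sorted (fun a b => b != linv a) w.

Record fgword := FGWord { fgval :> seq letter; fgvalP : reduced fgval }.
HB.instance Definition _ := [isSub for fgval].
HB.instance Definition _ := [Choice of fgword by <:].

Definition push (a : letter) (w : seq letter) :=
  if w is b :: w' then (if b == linv a then w' else a :: w) else [:: a].

Lemma push_reduced a w : reduced w -> reduced (push a w).
Proof.
case: w => [|b w] //= Hw; case: eqP => [_|ne]; first exact: path_sorted Hw.
by rewrite /= Hw andbT; apply/eqP.
Qed.

Definition mulw (u v : seq letter) := foldr push v u.

Lemma mulw_reduced u v : reduced v -> reduced (mulw u v).
Proof. by elim: u => //= a u IH Hv; apply/push_reduced/IH. Qed.

Lemma push_linv a w : reduced w -> push (linv a) (push a w) = w.
Proof.
case: w => [|b w] /=; first by rewrite linvK eqxx.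
case: eqP => [->|ne] Hw /=; last by rewrite linvK eqxx.
case: w Hw => [|c w] //= /andP[Hc _].
by rewrite linvK in Hc *; rewrite (negbTE Hc).
Qed.

Lemma mulw_push a v w : reduced v -> reduced w ->
  mulw (push a v) w = push a (mulw v w).
Proof.
case: v => [|b v] //= Hv Hw; case: eqP => [->|_] //=.
by rewrite -{1}(linvK a) push_linv // mulw_reduced // (path_sorted Hv).
Qed.

Lemma mulwA u v w : reduced v -> reduced w ->
  mulw (mulw u v) w = mulw u (mulw v w).
Proof.
move=> Hv Hw; elim: u => //= a u IH.
by rewrite mulw_push ?mulw_reduced // IH.
Qed.

Lemma mulw0 u : reduced u -> mulw u [::] = u.
Proof.
elim: u => //= a u IH Hu; rewrite IH; last exact: (path_sorted Hu).
case: u Hu {IH} => [|b u] //= /andP[Hb _].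
by rewrite (negbTE Hb).
Qed.

Definition invw (u : seq letter) := rev (map linv u).

Lemma invw_reduced u : reduced u -> reduced (invw u).
Proof.
rewrite /reduced /invw rev_sorted sorted_map => H.
apply: sub_sorted H => a b /=; rewrite /relpre /=.
by apply: contra => /eqP ->; rewrite !linvK.
Qed.

Lemma invwK u : invw (invw u) = u.
Proof. by rewrite /invw map_rev revK -map_comp (eq_map linvK) map_id. Qed.

Lemma mulVw u : reduced u -> mulw (invw u) u = [::].
Proof.
elim: u => //= a u IH Hu.
rewrite /invw /= rev_cons /mulw foldr_rcons /= linvK eqxx.
exact: IH (path_sorted Hu).
Qed.

Definition fg_one : fgword := @FGWord [::] isT.
Definition fg_mul (u v : fgword) : fgword :=
  FGWord (mulw_reduced u (fgvalP v)).
Definition fg_inv (u : fgword) : fgword := FGWord (invw_reduced (fgvalP u)).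

Lemma fg_mulA : associative fg_mul.
Proof. by move=> u v w; apply: val_inj; rewrite /= mulwA // fgvalP. Qed.
Lemma fg_mul1 : left_id fg_one fg_mul.
Proof. by move=> u; apply: val_inj. Qed.
Lemma fg_mulg1 : right_id fg_one fg_mul.
Proof. by move=> u; apply: val_inj; rewrite /= mulw0 // fgvalP. Qed.
Lemma fg_mulV : left_inverse fg_one fg_inv fg_mul.
Proof. by move=> u; apply: val_inj; rewrite /= mulVw // fgvalP. Qed.
Lemma fg_mulgV : right_inverse fg_one fg_inv fg_mul.
Proof.
move=> u; apply: val_inj => /=.
by rewrite -{1}(invwK u) mulVw // invw_reduced // fgvalP.
Qed.

HB.instance Definition _ :=
  isGroup.Build fgword fg_mulA fg_mul1 fg_mulg1 fg_mulV fg_mulgV.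

Definition free_group : groupType := fgword.

Definition fg_gen (i : 'I_d) : free_group := @FGWord [:: (i, false)] isT.

End FreeGroup.

(* phi : F_d -> K, x_i |-> t_i, and r(K,T) = d_F(Ker phi).                   *)

Definition free_eval (K : groupType) (d : nat) (t : 'I_d -> K)
    (w : free_group d) : K :=
  foldr (fun a acc => (if a.2 then (t a.1)^-1 else t a.1) * acc) 1 (fgval w).

Definition free_kernel (K : groupType) (d : nat) (t : 'I_d -> K) :
    free_group d -> Prop :=
  fun w => free_eval t w = 1.

Definition presentation_rank_le (K : groupType) (d : nat) (t : 'I_d -> K)
    (m : nat) := normal_rank_le (free_kernel t) m.

(* The words in T give a surjection psi : F -> G with pi \o psi = phi, so
   Ker phi = psi^-1(N). A surjective homomorphism maps the normal closure of a
   set onto the normal closure of its image, hence psi(S) normally generates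
   N whenever S normally generates Ker phi. Neither the finiteness of the
   index of N nor the absence of repetitions in T is used. *)
From HB Require Import structures.
From mathcomp Require Import all_boot.

Set Implicit Arguments.
Unset Strict Implicit.
Unset Printing Implicit Defensive.

Local Open Scope group_scope.

Section GroupHom.
Variables (G H : groupType) (f : G -> H).
Hypothesis f_hom : is_group_hom f.

Lemma group_hom1 : f 1 = 1.
Proof. by apply: (@mulgI _ (f 1)); rewrite -f_hom !mulg1. Qed.

Lemma group_homV x : f x^-1 = (f x)^-1.
Proof. by apply/esym/mulg1_eq; rewrite -f_hom mulgV group_hom1. Qed.

Lemma gen_by_image (A : G -> Prop) x :
  gen_by A x -> gen_by (fun y => exists2 z, A z & y = f z) (f x).
Proof.
elim=> [y Ay || y z _ IHy _ IHz | y _ IHy].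
- by apply: gen_base; exists y.
- by rewrite group_hom1; apply: gen_one.
- by rewrite f_hom; apply: gen_mul.
- by rewrite group_homV; apply: gen_inv.
Qed.

End GroupHom.

Lemma gen_by_mono (G : groupType) (A B : G -> Prop) :
  (forall x, A x -> B x) -> forall x, gen_by A x -> gen_by B x.
Proof.
move=> sAB x; elim=> [y Ay || y z _ IHy _ IHz | y _ IHy].
- exact/gen_base/sAB.
- exact: gen_one.
- exact: gen_mul.
- exact: gen_inv.
Qed.

Lemma normal_closure_sub (G : groupType) (N : G -> Prop) (S : seq G) :
  is_normal N -> (forall s, s \in S -> N s) ->
  forall g, normal_closure S g -> N g.
Proof.
move=> [[N1 NM NV] NJ] SN g.
elim=> [y [s Ss [x ->]] || y z _ Ny _ Nz | y _ Ny].
- exact/NJ/SN.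
- exact: N1.
- exact: NM.
- exact: NV.
Qed.

Lemma normal_closure_image (G H : groupType) (f : G -> H) (S : seq G) w :
  is_group_hom f -> normal_closure S w -> normal_closure (map f S) (f w).
Proof.
move=> f_hom /(gen_by_image f_hom); apply: gen_by_mono.
move=> _ [_ [s Ss [x ->]] ->].
exists (f s); first exact: map_f.
by exists (f x); rewrite !f_hom group_homV.
Qed.

Lemma normal_rank_le_preim (G H : groupType) (f : G -> H)
    (M : G -> Prop) (N : H -> Prop) (m : nat) :
  is_group_hom f -> (forall h, exists g, f g = h) -> is_normal N ->
  (forall g, M g <-> N (f g)) ->
  normal_rank_le M m -> normal_rank_le N m.
Proof.
move=> f_hom f_surj N_normal MN [S [sizeS [SM S_ncl]]].
have SN s : s \in map f S -> N s by case/mapP=> g /SM/MN Ng ->.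
exists (map f S); split; first by rewrite size_map.
split=> // h; split; first exact: normal_closure_sub.
have [g <-] := f_surj h; move=> /MN /S_ncl.
exact: normal_closure_image.
Qed.

Section FreeEval.
Variables (K : groupType) (d : nat) (t : 'I_d -> K).

Definition eval_letter (a : letter d) : K := if a.2 then (t a.1)^-1 else t a.1.

Definition eval_letters (s : seq (letter d)) : K :=
  foldr (fun a acc => eval_letter a * acc) 1 s.

Lemma eval_letters_push a s :
  eval_letters (push a s) = eval_letter a * eval_letters s.
Proof.
case: s => [|b s] //=; case: eqP => [-> | _] //=.
by rewrite mulgA /eval_letter /linv /=; case: a.2; rewrite /= ?mulVg ?mulgV mul1g.
Qed.

Lemma eval_letters_mulw u v :
  eval_letters (mulw u v) = eval_letters u * eval_letters v.
Proof.
elim: u => [|a u IHu] /=; first by rewrite mul1g.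
by rewrite eval_letters_push IHu mulgA.
Qed.

Lemma free_eval_hom : is_group_hom (free_eval t).
Proof. by move=> u v; apply: eval_letters_mulw. Qed.

End FreeEval.

Lemma free_eval_comp (G K : groupType) (f : G -> K) d (t : 'I_d -> G) w :
  is_group_hom f -> f (free_eval t w) = free_eval (fun i => f (t i)) w.
Proof.
move=> f_hom; rewrite /free_eval; elim: (fgval w) => [|a s IHs] /=.
  exact: group_hom1.
by rewrite f_hom IHs; case: a.2; rewrite ?group_homV.
Qed.

Lemma free_eval_onto (G : groupType) (t : seq G) :
  (forall g, gen_by (fun x => x \in t) g) ->
  forall g, exists w, free_eval (fun i : 'I_(size t) => nth 1 t i) w = g.
Proof.
move=> t_gen g; have psi_hom := free_eval_hom (fun i : 'I_(size t) => nth 1 t i).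
elim: (t_gen g) => [x tx || _ _ _ [u <-] _ [v <-] | _ _ [u <-]].
- exists (fg_gen (Ordinal (etrans (index_mem x t) tx))).
  by rewrite /free_eval /= mulg1 nth_index.
- by exists 1; rewrite group_hom1.
- by exists (u * v); rewrite psi_hom.
- by exists u^-1; rewrite group_homV.
Qed.

Theorem proposition2p4 (G K : groupType) (t : seq G) (N : G -> Prop)
    (pi : G -> K)
    (t_uniq : uniq t)
    (t_gen : forall g : G, gen_by (fun x => x \in t) g)
    (N_normal : is_normal N)
    (N_fin : finite_index N)
    (pi_hom : is_group_hom pi)
    (pi_surj : forall k : K, exists g : G, pi g = k)
    (pi_ker : forall g : G, pi g = 1 <-> N g)
    (m : nat) :
  presentation_rank_le (fun i : 'I_(size t) => pi (nth 1 t i)) m ->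
  normal_rank_le N m.
Proof.
apply: (normal_rank_le_preim (free_eval_hom _) (free_eval_onto t_gen) N_normal).
by move=> w; rewrite /free_kernel -free_eval_comp.
Qed.
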